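(* For the algorithm described in the context (under Assumptions (A1), (A2), (A3)), for each of the two step-size choices $\gamma_t(i)=\beta(t)$ and $\gamma_t(i)=\beta(n_t(i))$, almost surely for every state $i\in S$: $\sum_{t=0}^\infty q_{\mu_t}(i)\gamma_t(i)=\infty$ and $\sum_{t=0}^\infty q_{\mu_t}(i)^2\gamma_t(i)^2<\infty$.
   Context: Let $\alpha\in(0,1)$ and let $X$ be a Markov decision process with finite state space $S=\{1,\dots,n\}$, finite nonempty action sets $\mathcal A(i)$ ($i\in S$), transition probabilities $P_{ij}(u)$ ($u\in\mathcal A(i)$) and deterministic costs $c(i,u)\ge 0$. A policy is a map $\mu$ with $\mu(i)\in\mathcal A(i)$ for all $i$; it induces a Markov chain $X^\mu$ with transition probabilities $P_{ij}(\mu(i))$. A fixed probability distribution $p$ on $S$ is used as the initial distribution for all policies, and $q_\mu(i)$ denotes the probability that $X^\mu$ with $X^\mu_0\sim p$ ever visits $i$. Assumption (A1): $q_\mu(i)>0$ for every policy $\mu$ and every $i\in S$ (hence, as there are finitely many policies, $q_\mu(i)\ge\delta$ for some $\delta>0$). Assumption (A2): for all $i,j\in S$ and $u,v\in\mathcal A(i)$, $P_{ij}(u)>0$ iff $P_{ij}(v)>0$. The reachability graph is $G=(S,E)$ with $E=\{(i,j):P_{ij}(u)>0\text{ for some }u\}$; $\mathcal T$ denotes its set of transient states. Assumption (A3): the subgraph of $G$ induced by $\mathcal T$ is acyclic. Algorithm: set $J_0=0$. At iteration $t=0,1,2,\dots$: choose a greedy policy $\mu_t$ with respect to $J_t$,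 i.e. $\mu_t(i)\in\arg\min_{u\in\mathcal A(i)}[c(i,u)+\alpha\sum_jP_{ij}(u)J_t(j)]$; independently of the past, draw $X_0^{\mu_t}\sim p$ and simulate a trajectory $(X^{\mu_t}_k)_{k\ge0}$ under $\mu_t$. Let $N_t(i)=\inf\{k: X^{\mu_t}_k=i\}$ and, when $N_t(i)<\infty$, $\tilde J^{\mu_t}(i)=\sum_{k\ge N_t(i)}\alpha^{k-N_t(i)}c(X^{\mu_t}_k,\mu_t(X^{\mu_t}_k))$. Then $J_{t+1}(i)=(1-\gamma_t(i))J_t(i)+\gamma_t(i)\tilde J^{\mu_t}(i)$ if $N_t(i)<\infty$, and $J_{t+1}(i)=J_t(i)$ otherwise. Step sizes: $\beta:\mathbb N\to(0,1]$ deterministic with $\sum_t\beta(t)=\infty$, $\sum_t\beta(t)^2<\infty$, and $\beta$ nonincreasing for $t>T_0$ for some constant $T_0$. $n_t(i)=\sum_{\tau<t}\mathbf 1\{\text{trajectory at iteration }\tau\text{ visits }i\}$ is the number of iterations before $t$ whose trajectory visited $i$. *)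

From HB Require Import structures.
From mathcomp Require Import all_boot all_order all_algebra.
From mathcomp Require Import all_classical all_reals all_analysis.
Set Implicit Arguments.
Unset Strict Implicit.
Unset Printing Implicit Defensive.
Import Order.TTheory GRing.Theory Num.Theory.
Import numFieldNormedType.Exports.
Local Open Scope classical_set_scope.
Local Open Scope ring_scope.

(* MDP data: states S (finite), a finite type Act of action labels, with   *)
(* the admissible action set A(i) given by the predicate [adm i].          *)
(* Transition probabilities P i u j = P_ij(u), costs c i u.                *)

Section MDP.
Variables (R : realType) (S Act : finType).

Definition is_policy (adm : S -> pred Act) (mu : {ffun S -> Act}) :=
  forall i, mu i \in adm i.

(* h k j = probability that the chain X^mu started at j visits i within
   the first k steps (i.e. at some time 0..k) *)
Fixpoint hitp (P : S -> Act -> S -> R) (mu : {ffun S -> Act}) (i : S)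
    (k : nat) (j : S) : R :=
  match k with
  | 0 => (j == i)%:R
  | k'.+1 => if j == i then 1
             else \sum_(l : S) P j (mu j) l * hitp P mu i k' l
  end.

(* q_mu(i): probability that X^mu with X_0 ~ p ever visits i
   (monotone limit of the finite-horizon hitting probabilities) *)
Definition q_visit (p : S -> R) (P : S -> Act -> S -> R)
    (mu : {ffun S -> Act}) (i : S) : R :=
  \sum_(j : S) p j * limn (fun k => hitp P mu i k j).

Definition edge (adm : S -> pred Act) (P : S -> Act -> S -> R) : rel S :=
  fun i j => [exists u, (u \in adm i) && (0 < P i u j)].

Definition transient (adm : S -> pred Act) (P : S -> Act -> S -> R) : pred S :=
  fun i => [exists j, connect (edge adm P) i j && ~~ connect (edge adm P) j i].

Definition edge_T (adm : S -> pred Act) (P : S -> Act -> S -> R) : rel S :=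
  fun i j => [&& transient adm P i, transient adm P j & edge adm P i j].

Definition acyclic (e : rel S) := forall x y, e x y -> ~~ connect e y x.

Definition greedy (adm : S -> pred Act) (alpha : R) (P : S -> Act -> S -> R)
    (c : S -> Act -> R) (J : S -> R) (mu : {ffun S -> Act}) :=
  forall i, mu i \in adm i /\
    forall u, u \in adm i ->
      c i (mu i) + alpha * \sum_(j : S) P i (mu i) j * J j
      <= c i u + alpha * \sum_(j : S) P i u j * J j.

(* Simulation of a trajectory by the random-mapping representation:       *)
(* X_0 = x0, X_{k+1} = G (k+1) X_k (mu X_k), where G k x u is a sample of  *)
(* the distribution P x u.                                                 *)
Fixpoint traj (mu : {ffun S -> Act}) (x0 : S) (G : nat -> S -> Act -> S)
    (k : nat) : S :=
  match k with
  | 0 => x0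
  | k'.+1 => let x := traj mu x0 G k' in G k'.+1 x (mu x)
  end.

Definition visits (tr : nat -> S) (i : S) : bool := `[< exists k, tr k = i >].

(* N(i): first visit time of i (0 if never visited; then unused) *)
Definition first_visit (tr : nat -> S) (i : S) : nat :=
  match pselect (exists k, tr k == i) with
  | left H => ex_minn H
  | right _ => 0%N
  end.

Definition disc_cost (alpha : R) (c : S -> Act -> R) (mu : {ffun S -> Act})
    (tr : nat -> S) (i : S) : R :=
  let N := first_visit tr i in
  limn (series (fun m => alpha ^+ m * c (tr (N + m)%N) (mu (tr (N + m)%N)))).

(* The algorithm.  [cb] selects the step-size rule:                        *)
(*   cb = false : gamma_t(i) = beta(t);  cb = true : gamma_t(i) = beta(n_t(i)). *)
(* [sel t J] is the greedy policy chosen at iteration t when the current   *)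
(* estimate is J.  [x0 t] and [G t] are the random inputs of iteration t.  *)
(* [alg_state t] = (J_t, n_t).                                             *)
Definition stepsize (cb : bool) (beta : nat -> R) (t : nat) (cnt : S -> nat)
    (i : S) : R := if cb then beta (cnt i) else beta t.

Fixpoint alg_state (alpha : R) (c : S -> Act -> R) (beta : nat -> R) (cb : bool)
    (sel : nat -> (S -> R) -> {ffun S -> Act})
    (x0 : nat -> S) (G : nat -> nat -> S -> Act -> S) (t : nat)
    : (S -> R) * (S -> nat) :=
  match t with
  | 0 => (fun _ => 0, fun _ => 0%N)
  | t'.+1 =>
    let st := alg_state alpha c beta cb sel x0 G t' in
    let J := st.1 in let cnt := st.2 in
    let mu := sel t' J in
    let tr := traj mu (x0 t') (G t') in
    (fun i => if visits tr i then
                (1 - stepsize cb beta t' cnt i) * J i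
                + stepsize cb beta t' cnt i * disc_cost alpha c mu tr i
              else J i,
     fun i => (cnt i + visits tr i)%N)
  end.

Definition alg_policy alpha c beta cb sel x0 G (t : nat) : {ffun S -> Act} :=
  sel t (alg_state alpha c beta cb sel x0 G t).1.

Definition alg_gamma alpha c beta cb sel x0 G (t : nat) (i : S) : R :=
  stepsize cb beta t (alg_state alpha c beta cb sel x0 G t).2 i.

End MDP.

Definition mutually_independent {d} {T : measurableType d} {R : realType}
    (Pr : probability T R) {I : eqType} {S : Type} (X : I -> T -> S) :=
  forall (F : seq I) (v : I -> S), uniq F ->
    Pr (\bigcap_(i in [set` F]) (X i @^-1` [set v i])) =
    (\prod_(i <- F) Pr (X i @^-1` [set v i]))%E.

(* random inputs: initial states (index inl t) and transition samples
   (index inr (t, k, x, u)) combined into one family *)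
Definition rand_inputs {T S Act : Type} (X0 : nat -> T -> S)
    (Y : nat -> nat -> S -> Act -> T -> S)
    (ix : nat + (nat * nat * S * Act)) : T -> S :=
  match ix with
  | inl t => X0 t
  | inr (t, k, x, u) => Y t k x u
  end.

From HB Require Import structures.
From mathcomp Require Import all_boot all_order all_algebra.
From mathcomp Require Import all_classical all_reals all_analysis.
From mathcomp Require Import measurable_realfun.
From mathcomp Require Import ring zify.
Set Implicit Arguments.
Unset Strict Implicit.
Unset Printing Implicit Defensive.
Import Order.TTheory GRing.Theory Num.Theory.
Import numFieldNormedType.Exports.
Local Open Scope classical_set_scope.
Local Open Scope ring_scope.

(* By (A1) and the finiteness of the set of policies, q_{mu_t}(i) stays above
   some delta > 0, and since n_t(i) <= t and beta is eventually nonincreasing,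
   gamma_t(i) >= m beta(t) for a constant m > 0: the first series diverges.
   For the second one, q is bounded and gamma_t(i) <= beta(N_t) / m, where N_t
   counts the iterations s < t whose random inputs force the trajectory along
   one fixed path from the support of p to i, whatever the policy. Such a path
   exists by (A1) and, by (A2), has a probability eta > 0 that does not depend
   on the policy. These iterations are independent events of probability eta
   and N_t is independent of the t-th one, so
   E[f(N_t)] = E[f(N_t) 1_{U_t}] / eta; summing over t,
   E[sum_t f(N_t)] <= (sum_n f(n)) / eta, which is finite for f = beta^2. *)

Ltac set_tauto := apply/seteqP; split => ? /=; tauto.

Section IndependentEventCount.
Context {R : realType} {d : measure_display} {T : measurableType d}
  (Pr : probability T R) (U : nat -> set T).
Hypothesis mU : forall s, measurable (U s).

Definition count (t : nat) (w : T) : nat :=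
  (\sum_(s < t) nat_of_bool `[< U s w >])%N.

Lemma countS t w : count t.+1 w = (count t w + `[< U t w >])%N.
Proof. by rewrite /count big_ord_recr. Qed.

Lemma count_le t w : (count t w <= t)%N.
Proof.
elim: t => [|t IH]; first by rewrite /count big_ord0.
by rewrite countS; case: (`[< _ >]) => /=; lia.
Qed.

Definition count_eq t n := [set w | count t w = n].

Lemma count_eq0 n : count_eq 0 n = if n == 0%N then setT else set0.
Proof.
rewrite /count_eq /count; case: eqP => [->|/eqP n0];
  apply/seteqP; split => w /=; rewrite big_ord0 //.
by move=> h; rewrite -h in n0.
Qed.

Lemma count_eqS t n : count_eq t.+1 n =
  if n is n'.+1 then (count_eq t n' `&` U t) `|` (count_eq t n `\` U t)
  else count_eq t 0 `\` U t.
Proof.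
apply/seteqP; split => w; rewrite /count_eq /= countS;
  case: (asboolP (U t w)) => Uw; case: n => [|n] /=; try lia.
- by rewrite addn1 => -[] ->; left.
- by rewrite addn0 => ->.
- by rewrite addn0 => ->; right.
- by move=> [].
- by move=> [[-> _]|[_ ]]; [rewrite addn1|].
- by move=> [[_ ]|[-> _]]; [|rewrite addn0].
Qed.

Lemma measurable_count_eq t n : measurable (count_eq t n).
Proof.
elim: t n => [|t IH] n; first by rewrite count_eq0; case: ifP.
rewrite count_eqS; case: n => [|n]; first exact: measurableD.
by apply: measurableU; [exact: measurableI|exact: measurableD].
Qed.

Definition prob (A : set T) : R := fine (Pr A).

Lemma PrE A : measurable A -> Pr A = (prob A)%:E.
Proof. by move=> mA; rewrite /prob fineK // fin_num_measure. Qed.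

Lemma probD A B : measurable A -> measurable B ->
  prob (A `\` B) = prob A - prob (A `&` B).
Proof.
move=> mA mB; have finA : (Pr A < +oo)%E by rewrite (PrE mA) ltry.
by rewrite /prob measureD // fineB // fin_num_measure //; exact: measurableI.
Qed.

Lemma probU A B : measurable A -> measurable B -> A `&` B = set0 ->
  prob (A `|` B) = prob A + prob B.
Proof. by move=> mA mB AB; rewrite /prob measureU // fineD // fin_num_measure. Qed.

Definition all_events (L : seq nat) : set T := foldr (fun s A => U s `&` A) setT L.

Lemma all_eventsP L w : all_events L w <-> forall s, s \in L -> U s w.
Proof.
elim: L => [|a L IH] /=; first by split.
split=> [[Ua /IH H] s|H].
  by rewrite inE => /orP[/eqP ->//|]; exact: H.
split; first by apply: H; rewrite mem_head.
by apply/IH => s sL; apply: H; rewrite inE sL orbT.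
Qed.

Lemma measurable_all_events L : measurable (all_events L).
Proof. by elim: L => [|s L IH] //=; exact: measurableI. Qed.

Variable eta : R.
Hypothesis events_indep : forall L, uniq L -> prob (all_events L) = eta ^+ size L.

(* count t depends only on U_0, ..., U_(t-1), hence is independent of the
   events U_s with s >= t; the hypothesis only speaks of intersections of the
   U_s, so complements are handled along the induction on t. *)
Lemma prob_count_eq_all_events t n L : uniq L -> (forall s, s \in L -> (t <= s)%N) ->
  prob (count_eq t n `&` all_events L) = eta ^+ size L * prob (count_eq t n).
Proof.
elim: t n L => [|t IH] n L uL geL.
  rewrite count_eq0; case: ifP => _; last by rewrite set0I /prob measure0 mulr0.
  by rewrite setTI events_indep // /prob probability_setT mulr1.
have mCE m L' : measurable (count_eq t m `&` all_events L').
  exact: measurableI (measurable_count_eq _ _) (measurable_all_events _).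
have probDU m L' : uniq L' -> (forall s, s \in L' -> (t < s)%N) ->
    prob ((count_eq t m `&` all_events L') `\` U t) =
    eta ^+ size L' * prob (count_eq t m) - eta ^+ (size L').+1 * prob (count_eq t m).
  move=> uL' gtL'; rewrite probD // (_ : _ `&` U t = count_eq t m `&` all_events (t :: L'));
    last by rewrite /=; set_tauto.
  rewrite !IH //.
  - by rewrite /= uL' andbT; apply/negP => /gtL'; lia.
  - by move=> s; rewrite inE => /orP[/eqP ->//|/gtL']; lia.
  - by move=> s /gtL'; lia.
have gtL s : s \in L -> (t < s)%N by move/geL; lia.
have -> : prob (count_eq t.+1 n) = prob (count_eq t.+1 n `&` all_events [::]).
  by rewrite /= setIT.
rewrite count_eqS; case: n => [|n].
  have D L' : (count_eq t 0 `\` U t) `&` all_events L' =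
      (count_eq t 0 `&` all_events L') `\` U t by set_tauto.
  by rewrite !D !probDU //= !exprS expr0; ring.
have E L' : ((count_eq t n `&` U t) `|` (count_eq t n.+1 `\` U t)) `&` all_events L' =
    (count_eq t n `&` all_events (t :: L')) `|` ((count_eq t n.+1 `&` all_events L') `\` U t).
  by rewrite /=; set_tauto.
have uL1 : uniq (t :: L) by rewrite /= uL andbT; apply/negP => /gtL; lia.
have geL1 s : s \in t :: L -> (t <= s)%N.
  by rewrite inE => /orP[/eqP ->//|/gtL]; lia.
rewrite !E !probU.
- have get s : s \in [:: t] -> (t <= s)%N by rewrite inE => /eqP ->.
  by rewrite !probDU // !IH //= !exprS expr0; ring.
all: try exact: mCE.
all: try (apply: measurableD; [exact: mCE|exact: mU]).
all: by apply/seteqP; split => w //=; tauto.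
Qed.

Section Series.
Local Open Scope ereal_scope.
Variable f : nat -> R.
Hypothesis f_ge0 : forall n, (0 <= f n)%R.

(* f (count t w) and f (count t w) 1_{U t}(w), written as finite combinations
   of indicators so that their integrals are computed by linearity. *)
Definition f_count t w : \bar R := \sum_(n < t.+1) (f n * \1_(count_eq t n) w)%:E.
Definition f_count_U t w : \bar R :=
  \sum_(n < t.+1) (f n * \1_(count_eq t n `&` U t) w)%:E.

Lemma f_countE t w : f_count t w = (f (count t w))%:E.
Proof.
rewrite /f_count sumEFin; congr EFin.
have ct : (count t w < t.+1)%N by rewrite ltnS count_le.
rewrite (bigD1 (Ordinal ct)) //= indicE mem_set // mulr1 big1 ?addr0 // => n /eqP ne.
by rewrite indicE memNset ?mulr0 // => /= eq; apply: ne; apply: val_inj.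
Qed.

Lemma f_count_UE t w : f_count_U t w = if `[< U t w >] then (f (count t w))%:E else 0.
Proof.
case: asboolP => Uw; last first.
  by rewrite /f_count_U big1 // => n _; rewrite indicE memNset ?mulr0 //= => -[].
rewrite -f_countE /f_count; apply: eq_bigr => n _; congr (_ * _)%:E.
rewrite !indicE; congr (_%:R).
case: (boolP (w \in count_eq t n)) => h; first by rewrite mem_set //; split => //; exact/set_mem.
by rewrite memNset // => -[] /mem_set; rewrite (negbTE h).
Qed.

Lemma f_count_ge0 t w : 0 <= f_count t w.
Proof. by rewrite f_countE lee_fin. Qed.

Lemma f_count_U_ge0 t w : 0 <= f_count_U t w.
Proof. by rewrite f_count_UE; case: ifP => // _; rewrite lee_fin. Qed.

Lemma sum_f_count_U t w : \sum_(s < t) f_count_U s w = \sum_(n < count t w) (f n)%:E.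
Proof.
elim: t => [|t IH]; first by rewrite /count !big_ord0.
rewrite big_ord_recr /= IH f_count_UE countS; case: asboolP => _ /=.
  by rewrite addn1 big_ord_recr.
by rewrite addn0 adde0.
Qed.

Lemma nneseries_f_count_U_le w :
  \sum_(0 <= t <oo) f_count_U t w <= \sum_(0 <= n <oo) (f n)%:E.
Proof.
apply: lime_le; first by apply: is_cvg_nneseries => n _ _; exact: f_count_U_ge0.
apply: nearW => t; rewrite /= big_mkord sum_f_count_U.
rewrite -(big_mkord xpredT (fun n => (f n)%:E)).
by apply: nneseries_lim_ge => n _ _; rewrite lee_fin.
Qed.

Lemma measurable_f_count t : measurable_fun setT (f_count t).
Proof.
apply: emeasurable_sum => n; apply/measurable_EFinP.
by apply: measurable_funM => //; apply: measurable_indic; exact: measurable_count_eq.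
Qed.

Lemma measurable_f_count_U t : measurable_fun setT (f_count_U t).
Proof.
apply: emeasurable_sum => n; apply/measurable_EFinP.
apply: measurable_funM => //; apply: measurable_indic.
exact: measurableI (measurable_count_eq _ _) (mU t).
Qed.

Lemma integral_indic_combination (A : nat -> set T) t : (forall n, measurable (A n)) ->
  \int[Pr]_w (\sum_(n < t.+1) (f n * \1_(A n) w)%:E) = \sum_(n < t.+1) (f n)%:E * Pr (A n).
Proof.
move=> mA; rewrite ge0_integral_sum //.
- apply: eq_bigr => n _.
  rewrite (@integralZl_indic _ _ _ Pr setT measurableT (fun _ => A n)) //.
    by rewrite integral_indic // setIT.
  by move=> h; have := f_ge0 n; rewrite leNgt h.
- move=> n; apply/measurable_EFinP.
  by apply: measurable_funM => //; apply: measurable_indic.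
- by move=> n x _; rewrite lee_fin mulr_ge0 // indicE.
Qed.

Lemma integral_f_count_U t :
  \int[Pr]_w f_count_U t w = eta%:E * \int[Pr]_w f_count t w.
Proof.
rewrite (integral_indic_combination (A := fun n => count_eq t n `&` U t)); last first.
  by move=> n; exact: measurableI (measurable_count_eq _ _) (mU t).
rewrite (integral_indic_combination (A := count_eq t)); last exact: measurable_count_eq.
rewrite [RHS]ge0_sume_distrr; last by move=> n _; rewrite mule_ge0 ?lee_fin.
apply: eq_bigr => n _.
rewrite (PrE (measurable_count_eq t n)).
rewrite (PrE (measurableI _ _ (measurable_count_eq t n) (mU t))).
have := @prob_count_eq_all_events t n [:: t] isT.
rewrite /= setIT expr1 => ->; last by move=> s; rewrite inE => /eqP ->.
by rewrite -!EFinM; congr EFin; ring.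
Qed.

Lemma count_series_fin_ae : (0 < eta)%R -> \sum_(0 <= n <oo) (f n)%:E < +oo ->
  {ae Pr, forall w, \sum_(0 <= t <oo) (f (count t w))%:E < +oo}.
Proof.
move=> eta_gt0 sum_f.
have sum_f_countE w :
    \sum_(0 <= t <oo) (f (count t w))%:E = \sum_(0 <= t <oo) f_count t w.
  by apply: eq_eseriesr => t _; rewrite f_countE.
have m_sum : measurable_fun setT (fun w => \sum_(0 <= t <oo) f_count t w).
  by apply: ge0_emeasurable_sum => [k x _ _|k _];
    [exact: f_count_ge0|exact: measurable_f_count].
have int_fin : \int[Pr]_w (\sum_(0 <= t <oo) f_count t w) < +oo.
  rewrite integral_nneseries //; last 2 first.
  - exact: measurable_f_count.
  - by move=> n x _; exact: f_count_ge0.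
  have -> : \sum_(0 <= t <oo) \int[Pr]_w f_count t w =
            \sum_(0 <= t <oo) ((eta^-1)%:E * \int[Pr]_w f_count_U t w).
    apply: eq_eseriesr => t _; rewrite integral_f_count_U muleA -EFinM.
    by rewrite mulVf ?gt_eqF // mul1e.
  rewrite nneseriesZl; last by move=> t _; apply: integral_ge0 => w _; exact: f_count_U_ge0.
  rewrite -integral_nneseries //; last 2 first.
  - exact: measurable_f_count_U.
  - by move=> n x _; exact: f_count_U_ge0.
  apply: lte_mul_pinfty => //; first by rewrite lee_fin invr_ge0 ltW.
  apply: le_lt_trans sum_f.
  apply: (le_trans (y := \int[Pr]_w (cst (\sum_(0 <= n <oo) (f n)%:E)) w)).
    apply: ge0_le_integral => //.
    - by move=> w _; apply: nneseries_ge0 => t _ _; exact: f_count_U_ge0.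
    - by apply: ge0_emeasurable_sum => [k x _ _|k _];
        [exact: f_count_U_ge0|exact: measurable_f_count_U].
    - by move=> w _; exact: nneseries_f_count_U_le.
  rewrite integral_cst // -[leRHS]mule1; apply: lee_wpmul2l.
    by apply: nneseries_ge0 => *; rewrite lee_fin.
  exact: probability_le1.
have int_sum : Pr.-integrable setT (fun w => \sum_(0 <= t <oo) f_count t w).
  apply/integrableP; split => //.
  rewrite (eq_integral (fun w => \sum_(0 <= t <oo) f_count t w)) //.
  by move=> w _; rewrite gee0_abs //; apply: nneseries_ge0 => t _ _; exact: f_count_ge0.
apply: filterS (integrable_ae measurableT int_sum) => w /(_ I) fin_w.
by rewrite sum_f_countE -ge0_fin_numE // nneseries_ge0 // => t _ _; exact: f_count_ge0.
Qed.

End Series.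

End IndependentEventCount.

Section RealBounds.
Variable R : realType.

Lemma exists_seq_lb_gt0 (A : eqType) (s : seq A) (g : A -> R) :
  (forall x, x \in s -> 0 < g x) -> exists2 e, 0 < e & forall x, x \in s -> e <= g x.
Proof.
elim: s => [|a s IH] g_gt0; first by exists 1.
have [e e_gt0 e_le] : exists2 e, 0 < e & forall x, x \in s -> e <= g x.
  by apply: IH => x xs; apply: g_gt0; rewrite inE xs orbT.
exists (Num.min e (g a)); first by rewrite lt_min e_gt0 g_gt0 ?mem_head.
move=> x; rewrite inE => /orP[/eqP ->|xs]; first by rewrite ge_min lexx orbT.
by rewrite ge_min e_le.
Qed.

Lemma exists_seq_ub (A : eqType) (s : seq A) (g : A -> R) :
  exists M, forall x, x \in s -> g x <= M.
Proof.
elim: s => [|a s [M M_ge]]; first by exists 0.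
exists (Num.max M (g a)) => x; rewrite inE => /orP[/eqP ->|xs].
  by rewrite le_max lexx orbT.
by rewrite le_max M_ge.
Qed.

(* The constant m absorbs the finitely many steps before beta starts to
   decrease; m <= beta 0 <= 1 comes for free. *)
Lemma eventually_nonincreasing_cmp (beta : nat -> R) T0 :
  (forall t, 0 < beta t <= 1) ->
  (forall s t, (T0 < s)%N -> (s <= t)%N -> beta t <= beta s) ->
  exists2 m, 0 < m & forall n k, (n <= k)%N -> m * beta k <= beta n.
Proof.
move=> beta01 beta_mono.
have beta_gt0 k : 0 < beta k by case/andP: (beta01 k).
have beta_le1 k : beta k <= 1 by case/andP: (beta01 k).
have [m m_gt0 m_le] := @exists_seq_lb_gt0 _ (iota 0 T0.+1) beta (fun k _ => beta_gt0 k).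
exists m => // n k nk; case: (leqP n T0) => nT0.
  by apply: le_trans (m_le n _); rewrite ?mem_iota // ler_piMr // ltW.
apply: le_trans (beta_mono n k nT0 nk); rewrite ler_piMl ?(ltW (beta_gt0 k)) //.
by apply: le_trans (m_le 0%N _) (beta_le1 0%N); rewrite mem_iota.
Qed.

Lemma stepsize_bounds (S : finType) (beta : nat -> R) m cb t (cnt : S -> nat) i N :
  0 < m -> (forall n k, (n <= k)%N -> m * beta k <= beta n) ->
  (N <= cnt i <= t)%N ->
  m * beta t <= stepsize cb beta t cnt i <= beta (if cb then N else t) / m.
Proof.
move=> m_gt0 cmp /andP[Nc ct]; rewrite ler_pdivlMr // [_ * m]mulrC /stepsize.
by case: cb; rewrite !cmp.
Qed.

Lemma nneseries_pinfty_cmp (a b : nat -> R) e : 0 < e -> (forall t, 0 <= b t) ->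
  (forall t, e * b t <= a t) ->
  (\sum_(0 <= t <oo) (b t)%:E = +oo -> \sum_(0 <= t <oo) (a t)%:E = +oo)%E.
Proof.
move=> e_gt0 b_ge0 ba sum_b; apply/eqP; rewrite -leye_eq -(gt0_muley (x := e%:E)) //.
rewrite -sum_b -nneseriesZl; last by move=> t _; rewrite lee_fin.
apply: lee_nneseries => [t _ _|t _]; rewrite -EFinM lee_fin //.
by rewrite mulr_ge0 // ltW.
Qed.

Lemma nneseries_fin_cmp (a b : nat -> R) K : 0 <= K ->
  (forall t, 0 <= a t) -> (forall t, 0 <= b t) -> (forall t, a t <= K * b t) ->
  (\sum_(0 <= t <oo) (b t)%:E < +oo -> \sum_(0 <= t <oo) (a t)%:E < +oo)%E.
Proof.
move=> K_ge0 a_ge0 b_ge0 ab sum_b.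
apply: (le_lt_trans (y := (K%:E * \sum_(0 <= t <oo) (b t)%:E)%E)).
  rewrite -nneseriesZl; last by move=> t _; rewrite lee_fin.
  by apply: lee_nneseries => [t _ _|t _]; rewrite -?EFinM lee_fin.
by apply: lte_mul_pinfty; rewrite ?lee_fin.
Qed.

Lemma weighted_stepsize_series (q gam beta : nat -> R) (k : nat -> nat) delta M m :
  0 < delta -> 0 < m -> (forall t, 0 <= beta t) ->
  (forall t, delta <= q t <= M) -> (forall t, m * beta t <= gam t <= beta (k t) / m) ->
  (\sum_(0 <= t <oo) (beta t)%:E = +oo)%E ->
  (\sum_(0 <= t <oo) (beta (k t) ^+ 2)%:E < +oo)%E ->
  (\sum_(0 <= t <oo) (q t * gam t)%:E = +oo)%E /\
  (\sum_(0 <= t <oo) (q t ^+ 2 * gam t ^+ 2)%:E < +oo)%E.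
Proof.
move=> delta_gt0 m_gt0 beta_ge0 q_bd gam_bd sum_beta sum_k.
have q_ge0 t : 0 <= q t by apply: le_trans (ltW delta_gt0) _; case/andP: (q_bd t).
have gam_ge0 t : 0 <= gam t.
  by apply: le_trans (mulr_ge0 (ltW m_gt0) (beta_ge0 t)) _; case/andP: (gam_bd t).
split.
  apply: (nneseries_pinfty_cmp (mulr_gt0 delta_gt0 m_gt0) beta_ge0 _ sum_beta) => t.
  have /andP[q_le _] := q_bd t; have /andP[gam_le _] := gam_bd t.
  by rewrite -mulrA ler_pM ?mulr_ge0 ?(ltW delta_gt0) ?(ltW m_gt0).
apply: (nneseries_fin_cmp (sqr_ge0 (M / m)) _ (fun t => sqr_ge0 _) _ sum_k) => t.
  by rewrite mulr_ge0 ?sqr_ge0.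
have /andP[_ q_le] := q_bd t; have /andP[_ gam_le] := gam_bd t.
have q_gam : q t * gam t <= M / m * beta (k t).
  by rewrite [M / m * _]mulrAC -mulrA ler_pM.
have q_gam_ge0 : 0 <= q t * gam t by exact: mulr_ge0.
by rewrite -!exprMn !expr2; exact: ler_pM.
Qed.

Lemma prodr_const_seq (A : Type) (s : seq A) (a : R) : \prod_(x <- s) a = a ^+ size s.
Proof. by elim: s => [|b s IH]; rewrite ?big_nil ?expr0 // big_cons IH exprS. Qed.

End RealBounds.

Section Paths.
Variables (R : realType) (S Act : finType) (adm : S -> pred Act) (P : S -> Act -> S -> R).
Hypothesis P_ge0 : forall i u j, u \in adm i -> 0 <= P i u j.

Lemma exists_policy : (forall i, exists u, u \in adm i) -> exists mu, is_policy adm mu.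
Proof.
move=> adm_ne; exists [ffun j => xchoose (adm_ne j)] => j.
by rewrite ffunE; exact: xchooseP.
Qed.

Lemma hitp_path mu i k j : is_policy adm mu -> hitp P mu i k j != 0 ->
  exists r (x : nat -> S), [/\ x 0%N = j, x r = i &
     forall m, (m < r)%N -> 0 < P (x m) (mu (x m)) (x m.+1)].
Proof.
move=> pol; elim: k j => [|k IH] j /=.
  case: (boolP (j == i)) => [/eqP -> _|_]; last by rewrite eqxx.
  by exists 0%N, (fun _ => i); split => // m; rewrite ltn0.
case: (boolP (j == i)) => [/eqP -> _|_].
  by exists 0%N, (fun _ => i); split => // m; rewrite ltn0.
move=> hit_ne0; have [l _ Phit] :
    exists2 l, l \in index_enum S & P j (mu j) l * hitp P mu i k l != 0.
  apply/exists_inP; apply: contraNT hit_ne0; rewrite negb_exists_in => /forall_inP all0.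
  by apply/eqP; rewrite big1_seq // => l /andP[_ lS]; apply/eqP/negbNE/all0.
have Pl : P j (mu j) l != 0 by apply: contraNneq Phit => ->; rewrite mul0r.
have [|r [x [x0 xr xP]]] := IH l; first by apply: contraNneq Phit => ->; rewrite mulr0.
exists r.+1, (fun m => if m is m'.+1 then x m' else j); split => //.
case=> [|m] /=; last by rewrite ltnS; exact: xP.
by rewrite x0 lt_def Pl P_ge0.
Qed.

(* (A2) makes every admissible action follow the path with positive
   probability, not only the action chosen by mu. *)
Lemma path_to_visited_state (p : S -> R) mu i :
  (forall i j u v, u \in adm i -> v \in adm i -> (0 < P i u j) = (0 < P i v j)) ->
  (forall j, 0 <= p j) -> is_policy adm mu -> 0 < q_visit p P mu i ->
  exists r (x : nat -> S), [/\ 0 < p (x 0%N), x r = i &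
    forall m u, (m < r)%N -> u \in adm (x m) -> 0 < P (x m) u (x m.+1)].
Proof.
move=> A2 p_ge0 pol q_gt0.
have [j pj_lim] : exists j, p j * limn (fun k => hitp P mu i k j) != 0.
  apply/existsP; apply: contraTT q_gt0 => /existsPn all0.
  by rewrite /q_visit big1 ?ltxx // => j _; apply/eqP; move: (all0 j); rewrite negbK.
have [k hk] : exists k, hitp P mu i k j != 0.
  apply: contrapT => /forallNP all0; move: pj_lim.
  have -> : (fun k => hitp P mu i k j) = fun=> 0.
    by apply/funext => k; apply/eqP/negPn/negP; exact: all0.
  by rewrite lim_cst ?mulr0 ?eqxx.
have [r [x [x0 xr xP]]] := hitp_path pol hk.
exists r, x; split => // [|m u mr ua].
  by rewrite x0 lt_def p_ge0 andbT; apply: contraNneq pj_lim => ->; rewrite mul0r.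
by rewrite (A2 _ _ u (mu (x m)) ua (pol _)); exact: xP.
Qed.

Lemma q_visit_lb_gt0 (p : S -> R) :
  (forall mu, is_policy adm mu -> forall i, 0 < q_visit p P mu i) ->
  forall i, exists2 delta, 0 < delta &
    forall mu, is_policy adm mu -> delta <= q_visit p P mu i.
Proof.
move=> A1 i; pose pol := [pred mu : {ffun S -> Act} | [forall j, mu j \in adm j]].
have [delta delta_gt0 delta_le] := @exists_seq_lb_gt0 R _ [seq mu <- enum {ffun S -> Act} | pol mu]
  (fun mu => q_visit p P mu i)
  (fun mu mu_pol => A1 mu (fun j => (forallP (andP (eqbLR (mem_filter _ _ _) mu_pol)).1) j) i).
exists delta => // mu mu_pol; apply: delta_le.
by rewrite mem_filter mem_enum andbT; apply/forallP.
Qed.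

Lemma traj_path mu x0 G (x : nat -> S) r : x0 = x 0%N ->
  (forall m u, (m < r)%N -> u \in adm (x m) -> G m.+1 (x m) u = x m.+1) ->
  is_policy adm mu -> forall m, (m <= r)%N -> traj mu x0 G m = x m.
Proof.
move=> -> Gx pol; elim=> [|m IH] // mr /=.
by rewrite IH ?(ltnW mr) // Gx.
Qed.

Lemma alg_count_sum (alpha : R) (c : S -> Act -> R) beta cb sel x0 G t i :
  (alg_state alpha c beta cb sel x0 G t).2 i =
  (\sum_(s < t) visits (traj (sel s (alg_state alpha c beta cb sel x0 G s).1) (x0 s) (G s)) i)%N.
Proof. by elim: t => [|t IH]; rewrite ?big_ord0 // big_ord_recr /= IH. Qed.

Lemma alg_count_le (alpha : R) (c : S -> Act -> R) beta cb sel x0 G t i :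
  ((alg_state alpha c beta cb sel x0 G t).2 i <= t)%N.
Proof.
rewrite alg_count_sum -[leqRHS]card_ord -sum1_card leq_sum // => s _.
exact: leq_b1.
Qed.

End Paths.

Section PathEvents.
Variables (R : realType) (S Act : finType) (adm : S -> pred Act) (P : S -> Act -> S -> R).
Variables (p : S -> R) (d : measure_display) (Omega : measurableType d).
Variables (Pr : probability Omega R) (X0 : nat -> Omega -> S).
Variables (Y : nat -> nat -> S -> Act -> Omega -> S) (x : nat -> S) (r : nat).

Definition path_actions : seq (nat * Act) :=
  [seq mu <- [seq (m, u) | m <- iota 0 r, u <- enum Act] | mu.2 \in adm (x mu.1)].

Lemma mem_path_actions m u :
  ((m, u) \in path_actions) = (m < r)%N && (u \in adm (x m)).
Proof.
rewrite mem_filter /= andbC; congr (_ && _).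
apply/allpairsP/idP => [[[m' u'] [/= m'r _ [-> _]]]|mr].
  by move: m'r; rewrite mem_iota.
by exists (m, u); rewrite mem_iota mem_enum.
Qed.

Lemma path_actions_uniq : uniq path_actions.
Proof.
apply: filter_uniq; apply: allpairs_uniq; [exact: iota_uniq|exact: enum_uniq|].
by move=> [a b] [a' b'] _ _ /=.
Qed.

(* Quantifying over every admissible u makes the event independent of the
   policy followed at iteration s. *)
Definition path_event s := [set w | X0 s w = x 0%N /\
  forall m u, (m < r)%N -> u \in adm (x m) -> Y s m.+1 (x m) u w = x m.+1].

Definition path_inputs (L : seq nat) : seq (nat + (nat * nat * S * Act)) :=
  [seq inl s | s <- L] ++ [seq inr (s, mu.1.+1, x mu.1, mu.2) | s <- L, mu <- path_actions].

Definition path_value (ix : nat + (nat * nat * S * Act)) : S :=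
  match ix with inl _ => x 0%N | inr (_, k, _, _) => x k end.

Lemma all_path_eventsE L : all_events path_event L =
  \bigcap_(ix in [set` path_inputs L]) (rand_inputs X0 Y ix @^-1` [set path_value ix]).
Proof.
apply/seteqP; split => w.
- move/all_eventsP => Lw ix /=; rewrite mem_cat => /orP[].
    by case/mapP => s sL ->; case: (Lw s sL).
  case/allpairsP => -[s [m u]] [/= sL + ->]; rewrite mem_path_actions => /andP[mr ua].
  by have [_ Ys] := Lw s sL; exact: Ys.
- move=> Lw; apply/all_eventsP => s sL; split.
    by apply: (Lw (inl s)); rewrite /= mem_cat map_f.
  move=> m u mr ua; apply: (Lw (inr (s, m.+1, x m, u))).
  rewrite /= mem_cat; apply/orP; right; apply/allpairsP; exists (s, (m, u)).
  by rewrite mem_path_actions mr ua.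
Qed.

Lemma path_inputs_uniq L : uniq L -> uniq (path_inputs L).
Proof.
move=> uL; rewrite cat_uniq; apply/and3P; split.
- by rewrite map_inj_uniq // => a b [].
- by apply/hasPn => ix /allpairsP [[s mu] [_ _ ->]] /=; apply/mapP => -[].
apply: allpairs_uniq => //; first exact: path_actions_uniq.
move=> [s [m u]] [s' [m' u']] /allpairsP [[s1 [m1 u1]] [_ /= _ [-> -> ->]]].
by move=> /allpairsP [[s2 [m2 u2]] [_ /= _ [-> -> ->]]] /= [-> -> _ ->].
Qed.

Lemma measurable_path_event :
  (forall t j, measurable (X0 t @^-1` [set j])) ->
  (forall t k x u j, measurable (Y t k x u @^-1` [set j])) ->
  forall s, measurable (path_event s).
Proof.
move=> mX0 mY s; have -> : path_event s = all_events path_event [:: s] by rewrite /= setIT.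
rewrite all_path_eventsE; apply: fin_bigcap_measurable; first exact: finite_seq.
by move=> [t|[[[t k] y] u]] _ /=.
Qed.

Definition path_prob := p (x 0%N) * \prod_(mu <- path_actions) P (x mu.1) mu.2 (x mu.1.+1).

Lemma path_prob_gt0 : 0 < p (x 0%N) ->
  (forall m u, (m < r)%N -> u \in adm (x m) -> 0 < P (x m) u (x m.+1)) -> 0 < path_prob.
Proof.
move=> px0 xP; rewrite mulr_gt0 // big_seq; apply: prodr_gt0 => -[m u].
by rewrite mem_path_actions => /andP[mr ua]; exact: xP.
Qed.

Lemma path_events_indep :
  (forall t j, Pr (X0 t @^-1` [set j]) = (p j)%:E) ->
  (forall t k x u j, u \in adm x -> Pr (Y t k x u @^-1` [set j]) = (P x u j)%:E) ->
  mutually_independent Pr (rand_inputs X0 Y) ->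
  forall L, uniq L -> prob Pr (all_events path_event L) = path_prob ^+ size L.
Proof.
move=> PrX0 PrY indep L uL.
rewrite /prob all_path_eventsE indep; last exact: path_inputs_uniq.
rewrite big_cat /= !big_map big_allpairs_dep /=.
rewrite [X in (X * _)%E](eq_bigr (fun _ => (p (x 0%N))%:E)); last by move=> s _; rewrite PrX0.
rewrite [X in (_ * X)%E](eq_bigr (fun _ =>
    (\prod_(mu <- path_actions) P (x mu.1) mu.2 (x mu.1.+1))%:E)); last first.
  move=> s _; rewrite -prodEFin big_seq [in RHS]big_seq; apply: eq_bigr => -[m u].
  by rewrite mem_path_actions => /andP[_ ua] /=; rewrite PrY.
by rewrite !prodEFin !prodr_const_seq exprMn.
Qed.

Lemma path_event_visits mu s w : is_policy adm mu -> path_event s w ->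
  visits (traj mu (X0 s w) (fun k y u => Y s k y u w)) (x r).
Proof.
move=> pol [Xs Ys]; apply/asboolP; exists r.
by apply: (@traj_path _ _ adm _ _ _ x r) => // m u mr ua; exact: Ys.
Qed.

Lemma count_path_event_le (alpha : R) c beta cb sel t w :
  (forall t J, is_policy adm (sel t J)) ->
  (count path_event t w <= (alg_state alpha c beta cb sel (fun t => X0 t w)
     (fun t k y u => Y t k y u w) t).2 (x r))%N.
Proof.
move=> pol; rewrite alg_count_sum /count leq_sum // => s _.
by case: asboolP => // /(path_event_visits (pol _ _)) ->.
Qed.

End PathEvents.

Theorem lemma4
  (R : realType) (S Act : finType)
  (adm : S -> pred Act) (P : S -> Act -> S -> R) (c : S -> Act -> R)
  (alpha : R) (p : S -> R) (beta : nat -> R) (T0 : nat)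
  (sel : nat -> (S -> R) -> {ffun S -> Act})
  (d : measure_display) (Omega : measurableType d) (Pr : probability Omega R)
  (X0 : nat -> Omega -> S) (Y : nat -> nat -> S -> Act -> Omega -> S) :
  (* MDP data *)
  (0 < alpha < 1) ->
  (forall i, exists u, u \in adm i) ->
  (forall i u j, u \in adm i -> 0 <= P i u j) ->
  (forall i u, u \in adm i -> \sum_(j : S) P i u j = 1) ->
  (forall i u, u \in adm i -> 0 <= c i u) ->
  (forall j, 0 <= p j) -> \sum_(j : S) p j = 1 ->
  (* (A1) *)
  (forall mu, is_policy adm mu -> forall i, 0 < q_visit p P mu i) ->
  (* (A2) *)
  (forall i j u v, u \in adm i -> v \in adm i -> (0 < P i u j) = (0 < P i v j)) ->
  (* (A3) *)
  acyclic (edge_T adm P) ->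
  (* step sizes *)
  (forall t, 0 < beta t <= 1) ->
  (\sum_(0 <= t <oo) (beta t)%:E = +oo)%E ->
  (\sum_(0 <= t <oo) (beta t ^+ 2)%:E < +oo)%E ->
  (forall s t, (T0 < s)%N -> (s <= t)%N -> beta t <= beta s) ->
  (* greedy policy selection *)
  (forall t J, greedy adm alpha P c J (sel t J)) ->
  (* randomness: independent initial states ~ p and transition samples ~ P x u *)
  (forall t j, measurable (X0 t @^-1` [set j])) ->
  (forall t k x u j, measurable (Y t k x u @^-1` [set j])) ->
  (forall t j, Pr (X0 t @^-1` [set j]) = (p j)%:E) ->
  (forall t k x u j, u \in adm x -> Pr (Y t k x u @^-1` [set j]) = (P x u j)%:E) ->
  mutually_independent Pr (rand_inputs X0 Y) ->
  (* conclusion, for both step-size rules *)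
  forall cb : bool,
  {ae Pr, forall w, forall i : S,
     let mu_ t := alg_policy alpha c beta cb sel (fun t => X0 t w)
                    (fun t k x u => Y t k x u w) t in
     let gam t := alg_gamma alpha c beta cb sel (fun t => X0 t w)
                    (fun t k x u => Y t k x u w) t i in
     (\sum_(0 <= t <oo) (q_visit p P (mu_ t) i * gam t)%:E = +oo)%E /\
     (\sum_(0 <= t <oo) ((q_visit p P (mu_ t) i) ^+ 2 * (gam t) ^+ 2)%:E < +oo)%E}.
Proof.
move=> _ adm_ne P_ge0 _ _ p_ge0 _ A1 A2 _ beta01 sum_beta sum_beta2 beta_mono greedy_sel
  mX0 mY PrX0 PrY indep cb.
have pol_sel t J : is_policy adm (sel t J) by move=> j; case: (greedy_sel t J j).
have [m m_gt0 beta_cmp] := eventually_nonincreasing_cmp beta01 beta_mono.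
have [mu0 pol0] := exists_policy adm_ne.
apply: filter_forall => i.
have [delta delta_gt0 q_lb] := q_visit_lb_gt0 A1 i.
have [M q_ub] := exists_seq_ub (enum {ffun S -> Act}) (fun mu => q_visit p P mu i).
have [r [x [px0 xr xP]]] := path_to_visited_state P_ge0 A2 p_ge0 pol0 (A1 mu0 pol0 i).
subst i.
have beta_ge0 t : 0 <= beta t by case/andP: (beta01 t) => /ltW.
have := count_series_fin_ae (measurable_path_event adm x r mX0 mY)
  (path_events_indep x r PrX0 PrY indep) (fun n => sqr_ge0 (beta n)) (path_prob_gt0 px0 xP) sum_beta2.
apply: filterS => w sum_count.
pose mu_ t := alg_policy alpha c beta cb sel (X0^~ w) (fun t k y u => Y t k y u w) t.
apply: (weighted_stepsize_series (q := fun t => q_visit p P (mu_ t) (x r))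
  (k := fun t => if cb then count (path_event adm X0 Y x r) t w else t)
  (M := M) delta_gt0 m_gt0 beta_ge0) => // [t|t|].
- by rewrite q_lb ?q_ub ?mem_enum //; exact: pol_sel.
- by apply: stepsize_bounds => //; rewrite count_path_event_le ?alg_count_le.
- by case: (cb).
Qed.
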